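(* Assume that every $f_m^j$ ($m\in[M]$, $j\in\{0,\dots,N-1\}$) is $\mu$-strongly convex with $\mu>0$ and $L$-smooth. Run the algorithm RR-CLI described in the context with client step size $0<\gamma\le \frac1L$, server step size $\eta=\gamma N$ and global step size $\theta=\eta R$. Then the iterates satisfy $$\mathbb{E}\big[\|x_T-x_\star\|^2\big]\le (1-\gamma\mu)^{NRT}\|x_0-x_\star\|^2+\frac{2\gamma^2}{\mu}\max_{t,r,m,j}\sigma^2_{m,\mathrm{DS}}(t,r,j),$$ where the maximum is over meta-epochs $t$, rounds $r\in\{0,\dots,R-1\}$, clients $m\in S_t^{\lambda_r}$ and $j\in\{0,\dots,N-1\}$, and $\sigma^2_{m,\mathrm{DS}}(t,r,j)$ is defined in the context.
   Context: Setting. There are $M$ clients, each holding $N$ data points. For $m\in[M]$ and $j\in\{0,\dots,N-1\}$, $f_m^j:\mathbb{R}^d\to\mathbb{R}$ is differentiable. Define $f_m=\frac1N\sum_j f_m^j$ and $f=\frac1M\sum_{m=1}^M f_m$, and let $x_\star$ be a minimizer of $f$. A function $h$ is $L$-smooth if $\|\nabla h(x)-\nabla h(y)\|\le L\|x-y\|$ for all $x,y$. It is $\mu$-strongly convex if $\langle\nabla h(x),y-x\rangle\le-(h(x)-h(y)+\frac\mu2\|x-y\|^2)$ for all $x,y$. The Bregman divergence is $D_h(x,y)=h(x)-h(y)-\langle\nabla h(y),x-y\rangle$. Algorithm RR-CLI. The inputs are a cohort size $C$ with $M=CR$ for an integer $R$, step sizes $\gamma,\eta,\theta>0$, an initial point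 $x_0\in\mathbb{R}^d$, and a number of meta-epochs $T\ge1$. In each meta-epoch $t=0,\dots,T-1$: - The $M$ clients are partitioned uniformly at random into $R$ disjoint cohorts of size $C$, taken in a uniformly random order $S_t^{\lambda_0},\dots,S_t^{\lambda_{R-1}}$. - Each client $m$ uses a uniformly random permutation $\pi_m=(\pi_m^0,\dots,\pi_m^{N-1})$ of its data indices. - All permutations are independent. They are either sampled once before the first meta-epoch and reused, or resampled independently at every meta-epoch; the result holds for either option. - Set $x_t^0=x_t$. For $r=0,\dots,R-1$, each client $m\in S_t^{\lambda_r}$ sets $x^{r,0}_{m,t}=x^r_t$ and computes $x^{r,j+1}_{m,t}=x^{r,j}_{m,t}-\gamma\nabla f_m^{\pi_m^j}(x^{r,j}_{m,t})$ for $j=0,\dots,N-1$, followed by $g^r_{m,t}=\frac{1}{\gamma N}(x^r_t-x^{r,N}_{m,t})$. - The server sets $g^r_t=\frac1C\sum_{m\in S_t^{\lambda_r}}g^r_{m,t}$ and $x^{r+1}_t=x^r_t-\eta g^r_t$. - Finally, $x_{t+1}=x_t-\theta\frac{x_t-x^R_t}{\eta R}$. Expectations are over the random permutations. Star sequence. In meta-epoch $t$, using the same cohorts and permutations as the algorithm, define $x^0_\star=x_\star$. For each $r$ and each $m\in S_t^{\lambda_r}$, set $x^{r,0}_{m,\star}=x^r_\star$, then $x^{r,j+1}_{m,\star}=x^{r,j}_{m,\star}-\gamma\nabla f_m^{\pi_m^j}(x_\star)$, and $x^{r+1}_\star=\frac1C\sum_{m\in S_t^{\lambda_r}}x^{r,N}_{m,\star}$.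 Finally set $\sigma^2_{m,\mathrm{DS}}(t,r,j)=\frac{1}{\gamma^2}\mathbb{E}\big[D_{f_m^{\pi_m^j}}(x^{r,j}_{m,\star},x_\star)\big]$. *)

From HB Require Import structures.
From mathcomp Require Import all_boot all_order all_algebra all_fingroup.
From mathcomp Require Import all_classical all_reals all_analysis.
Set Implicit Arguments. Unset Strict Implicit. Unset Printing Implicit Defensive.
Import Order.TTheory GRing.Theory Num.Theory.
Import numFieldNormedType.Exports.
Local Open Scope ring_scope.

Section Defs.
Variable R : realType.
Variable d : nat.
Notation vec := 'rV[R]_d.

Definition dot (u v : vec) : R := \sum_(i < d) u 0 i * v 0 i.
Definition sqnorm (u : vec) : R := dot u u.
Definition enorm (u : vec) : R := Num.sqrt (sqnorm u).

Definition grad (h : vec -> R) (x : vec) : vec :=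
  \row_(i < d) ('D_(delta_mx 0 i) h x).

Definition L_smooth (L : R) (h : vec -> R) : Prop :=
  forall x y, enorm (grad h x - grad h y) <= L * enorm (x - y).

Definition strongly_convex (mu : R) (h : vec -> R) : Prop :=
  forall x y, dot (grad h x) (y - x) <= - (h x - h y + mu / 2 * sqnorm (x - y)).

Definition bregman (h : vec -> R) (x y : vec) : R :=
  h x - h y - dot (grad h y) (x - y).

Definition Exp (O : finType) (X : O -> R) : R :=
  (#|O|%:R)^-1 * \sum_(w : O) X w.
Definition CExp (O : finType) (X : O -> R) (A : pred O) : R :=
  (\sum_(w : O | A w) X w) / (#|A|%:R).

Variables (C Rc N : nat).
Notation M := (C * Rc)%N.
Variable f : 'I_M -> 'I_N -> vec -> R.

Definition favg (x : vec) : R :=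
  (M%:R)^-1 * \sum_(m < M) ((N%:R)^-1 * \sum_(j < N) f m j x).

Definition pseq (p : {perm 'I_N}) : seq 'I_N := [seq p i | i <- enum 'I_N].

(* cohort partition in random order, encoded by a permutation rho of clients:
   client m belongs to the cohort of round r iff (rho^-1 m) / C = r. *)
Definition in_cohort (rho : {perm 'I_M}) (r : nat) (m : 'I_M) : bool :=
  ((rho^-1)%g m %/ C == r)%N.

(* data of one meta-epoch: cohort permutation and client data permutations *)
Definition epoch_data := ({perm 'I_M} * {ffun 'I_M -> {perm 'I_N}})%type.

Variables (gamma eta theta : R).

Definition local_run (m : 'I_M) (p : {perm 'I_N}) (j : nat) (x : vec) : vec :=
  foldl (fun y i => y - gamma *: grad (f m i) y) x (take j (pseq p)).

Definition client_g (m : 'I_M) (p : {perm 'I_N}) (x : vec) : vec :=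
  (gamma * N%:R)^-1 *: (x - local_run m p N x).

Definition round_step (ed : epoch_data) (r : nat) (x : vec) : vec :=
  x - eta *: ((C%:R)^-1 *: \sum_(m < M | in_cohort ed.1 r m) client_g m (ed.2 m) x).

Fixpoint rounds (ed : epoch_data) (r : nat) (x : vec) : vec :=
  match r with
  | 0 => x
  | r'.+1 => round_step ed r' (rounds ed r' x)
  end.

Definition epoch_step (ed : epoch_data) (x : vec) : vec :=
  x - theta *: ((eta * Rc%:R)^-1 *: (x - rounds ed Rc x)).

Definition local_star (xs : vec) (m : 'I_M) (p : {perm 'I_N}) (j : nat) (x : vec) : vec :=
  foldl (fun y i => y - gamma *: grad (f m i) xs) x (take j (pseq p)).

Fixpoint star_rounds (xs : vec) (ed : epoch_data) (r : nat) : vec :=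
  match r with
  | 0 => xs
  | r'.+1 => (C%:R)^-1 *:
      \sum_(m < M | in_cohort ed.1 r' m) local_star xs m (ed.2 m) N (star_rounds xs ed r')
  end.

Definition star_breg (xs : vec) (ed : epoch_data) (r : nat) (m : 'I_M) (j : 'I_N) : R :=
  bregman (f m (ed.2 m j)) (local_star xs m (ed.2 m) j (star_rounds xs ed r)) xs.

Variable T : nat.

(* Option 1: cohorts and data permutations resampled at every meta-epoch. *)
Definition Omega_resample := {ffun 'I_T -> epoch_data}.
Definition ed_resample (w : Omega_resample) (t : 'I_T) : epoch_data := w t.
(* Option 2: cohorts resampled each meta-epoch, data permutations sampled once. *)
Definition Omega_once :=
  ({ffun 'I_T -> {perm 'I_M}} * {ffun 'I_M -> {perm 'I_N}})%type.
Definition ed_once (w : Omega_once) (t : 'I_T) : epoch_data := (w.1 t, w.2).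

Definition run (ed : 'I_T -> epoch_data) (x0 : vec) : vec :=
  foldl (fun x t => epoch_step (ed t) x) x0 (enum 'I_T).

Definition sigmaDS (O : finType) (ed : O -> 'I_T -> epoch_data) (xs : vec)
    (t : 'I_T) (r : 'I_Rc) (m : 'I_M) (j : 'I_N) : R :=
  (gamma ^+ 2)^-1 *
    CExp (fun w => star_breg xs (ed w t) r m j) (fun w => in_cohort (ed w t).1 r m).

Definition max_sigma (O : finType) (ed : O -> 'I_T -> epoch_data) (xs : vec) : R :=
  \big[Num.max/0]_(t < T) \big[Num.max/0]_(r < Rc) \big[Num.max/0]_(m < M)
     \big[Num.max/0]_(j < N) sigmaDS ed xs t r m j.

Definition rr_cli_bound (O : finType) (ed : O -> 'I_T -> epoch_data) (mu : R) (x0 xs : vec) : Prop :=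
  Exp (fun w => sqnorm (run (ed w) x0 - xs))
    <= (1 - gamma * mu) ^+ (N * Rc * T) * sqnorm (x0 - xs)
       + 2 * gamma ^+ 2 / mu * max_sigma ed xs.

End Defs.

From HB Require Import structures.
From mathcomp Require Import all_boot all_order all_algebra all_fingroup.
From mathcomp Require Import all_classical all_reals all_analysis.
From mathcomp Require Import ring lra.
Set Implicit Arguments. Unset Strict Implicit. Unset Printing Implicit Defensive.
Import Order.TTheory GRing.Theory Num.Theory.
Import numFieldNormedType.Exports.
Local Open Scope ring_scope.

(* Couple every local step of RR-CLI with the same step of the star sequence.  For
   gamma <= 1/L, strong convexity and the cocoercivity bound
   D_h(y, x) >= |grad h y - grad h x|^2 / 2L give
     |(y - gamma grad h y) - (z - gamma grad h x_star)|^2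
       <= (1 - gamma mu) |y - z|^2 + 2 gamma D_h(z, x_star).
   With eta = gamma N the server step is the cohort average of the local end points,
   which by Jensen does not increase the averaged squared distance, and with
   theta = eta R the next meta-epoch starts at the end of the last round.  The star
   sequence is back at x_star after every meta-epoch because the gradients at x_star sum to
   zero.  As sigma^2_DS is the expectation conditional on the client's cohort, double
   counting bounds the expected cohort average of the Bregman terms by
   gamma^2 max sigma^2_DS =: gamma^2 s.  Hence along the N R T local steps the expected
   squared distance obeys e' <= (1 - gamma mu) e + 2 gamma^3 s, which preserves
   e <= (1 - gamma mu)^n e_0 + 2 gamma^2 s / mu. *)

Section InnerProduct.
Variables (R : realType) (d : nat).
Implicit Types (u v w : 'rV[R]_d).

Lemma dotC u v : dot u v = dot v u.
Proof. by apply: eq_bigr => i _; rewrite mulrC. Qed.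

Lemma dotDl u v w : dot (u + v) w = dot u w + dot v w.
Proof. by rewrite /dot -big_split; apply: eq_bigr => i _; rewrite !mxE mulrDl. Qed.

Lemma dotNl u w : dot (- u) w = - dot u w.
Proof. by rewrite /dot -sumrN; apply: eq_bigr => i _; rewrite !mxE mulNr. Qed.

Lemma dotZl (a : R) u w : dot (a *: u) w = a * dot u w.
Proof. by rewrite /dot mulr_sumr; apply: eq_bigr => i _; rewrite !mxE mulrA. Qed.

Lemma dotBl u v w : dot (u - v) w = dot u w - dot v w.
Proof. by rewrite dotDl dotNl. Qed.

Lemma dotNr u w : dot w (- u) = - dot w u.
Proof. by rewrite dotC dotNl dotC. Qed.

Lemma dotBr u v w : dot w (u - v) = dot w u - dot w v.
Proof. by rewrite !(dotC w) dotBl. Qed.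

Lemma dotZr (a : R) u w : dot w (a *: u) = a * dot w u.
Proof. by rewrite dotC dotZl dotC. Qed.

Lemma dot_suml (I : Type) (r : seq I) (P : pred I) (F : I -> 'rV[R]_d) w :
  dot (\sum_(i <- r | P i) F i) w = \sum_(i <- r | P i) dot (F i) w.
Proof.
elim: r => [|a r IH]; last by rewrite !big_cons; case: (P a); rewrite ?dotDl IH.
by rewrite !big_nil /dot big1 // => i _; rewrite mxE mul0r.
Qed.

Lemma sqnorm_ge0 u : 0 <= sqnorm u.
Proof. by apply: sumr_ge0 => i _; rewrite -expr2 sqr_ge0. Qed.

Lemma sqnorm_eq0 u : sqnorm u = 0 -> u = 0.
Proof.
move=> /eqP; rewrite psumr_eq0 => [/allP u0|i _]; last by rewrite -expr2 sqr_ge0.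
apply/rowP => i; rewrite mxE; apply/eqP.
by have /implyP/(_ isT) := u0 i (mem_index_enum i); rewrite mulf_eq0 orbb.
Qed.

Lemma sqnormB u v : sqnorm (u - v) = sqnorm u - 2 * dot u v + sqnorm v.
Proof. rewrite /sqnorm !dotBl !dotBr (dotC v u); ring. Qed.

Lemma sqnormZ (a : R) u : sqnorm (a *: u) = a ^+ 2 * sqnorm u.
Proof. rewrite /sqnorm dotZl dotZr; ring. Qed.

Lemma sqnormN u : sqnorm (- u) = sqnorm u.
Proof. by rewrite /sqnorm dotNl dotNr opprK. Qed.

Lemma sqnormBC u v : sqnorm (u - v) = sqnorm (v - u).
Proof. by rewrite -sqnormN opprB. Qed.

Lemma dot_le_sqnorm u v (s : R) : 0 < s ->
  dot u v <= s / 2 * sqnorm u + s^-1 / 2 * sqnorm v.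
Proof.
move=> s0; have := sqnorm_ge0 (s *: u - v).
rewrite sqnormB sqnormZ dotZl => h; rewrite -subr_ge0.
suff -> : s / 2 * sqnorm u + s^-1 / 2 * sqnorm v - dot u v
        = s^-1 / 2 * (s ^+ 2 * sqnorm u - 2 * (s * dot u v) + sqnorm v).
  by apply: mulr_ge0 => //; rewrite divr_ge0 // invr_ge0 ltW.
by field; rewrite gt_eqF.
Qed.

Lemma sqnorm_avg_le (I : finType) (P : pred I) (v : I -> 'rV[R]_d) (c : R) :
  0 < c -> \sum_(i | P i) 1 = c ->
  sqnorm (c^-1 *: \sum_(i | P i) v i) <= c^-1 * \sum_(i | P i) sqnorm (v i).
Proof.
move=> c0 Pc; set a := c^-1 *: \sum_(i | P i) v i.
have Sa : \sum_(i | P i) v i = c *: a by rewrite /a scalerA mulfV ?scale1r ?gt_eqF.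
have : 0 <= \sum_(i | P i) sqnorm (v i - a) by apply: sumr_ge0 => i _; exact: sqnorm_ge0.
have -> : \sum_(i | P i) sqnorm (v i - a) =
    \sum_(i | P i) sqnorm (v i) - 2 * dot (\sum_(i | P i) v i) a + c * sqnorm a.
  under eq_bigr do rewrite sqnormB.
  rewrite big_split /= sumrB dot_suml mulr_sumr -Pc mulr_suml.
  by congr (_ - _ + _); apply: eq_bigr => i _; rewrite mul1r.
rewrite Sa dotZl => H.
rewrite -(ler_pM2l c0) mulrA mulfV ?gt_eqF // mul1r.
rewrite /sqnorm in H *; lra.
Qed.

Lemma L_smooth_sqnorm (L : R) (h : 'rV[R]_d -> R) x y : L_smooth L h ->
  sqnorm (grad h x - grad h y) <= L ^+ 2 * sqnorm (x - y).
Proof.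
have sqr_enorm u : enorm u ^+ 2 = sqnorm u by rewrite sqr_sqrtr // sqnorm_ge0.
move=> /(_ x y) Hxy; rewrite -!sqr_enorm -exprMn.
by apply: lerXn2r; rewrite ?nnegrE ?sqrtr_ge0 //; apply: le_trans Hxy; exact: sqrtr_ge0.
Qed.

End InnerProduct.

Section Smoothness.
Variables (R : realType) (d : nat).
Notation vec := 'rV[R]_d.
Implicit Types (h : vec -> R) (x y z v : vec).

Lemma derive_grad h z v : differentiable h z -> 'D_v h z = dot (grad h z) v.
Proof.
move=> dz; rewrite deriveE // {1}(row_sum_delta v) linear_sum /= /dot.
by apply: eq_bigr => i _; rewrite linearZ /= mxE -deriveE // mulrC.
Qed.

Lemma is_derive_line h x v (t : R) : (forall z, differentiable h z) ->
  is_derive t 1 (fun r : R => h (r *: v + x)) (dot (grad h (t *: v + x)) v).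
Proof.
move=> dh.
have E : (fun s : R => s^-1 *: (((fun r : R => h (r *: v + x)) \o shift t) (s *: 1)
                                  - h (t *: v + x)))
        = (fun s : R => s^-1 *: ((h \o shift (t *: v + x)) (s *: v) - h (t *: v + x))).
  by apply/funext => s /=; rewrite /shift /= scalerDl addrA [_%:A]mulr1.
split; first by rewrite /derivable E; exact: diff_derivable.
by rewrite /derive E -derive_grad.
Qed.

Lemma is_derive_quadratic (c K r : R) :
  is_derive r 1 (fun s : R => c * s + K * (s * s)) (c + K * (r + r)).
Proof.
have -> : (fun s : R => c * s + K * (s * s)) = c \*: id + K \*: (id * id) by [].
have : is_derive r 1 (c \*: id + K \*: (id * id)) (c *: 1 + K *: (r *: 1 + r *: 1)).
  by apply: is_deriveD; apply: is_deriveZ.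
by congr is_derive; rewrite /GRing.scale /= !mulr1.
Qed.

Lemma L_smooth_bregman_le h (L : R) x y :
  (forall z, differentiable h z) -> L_smooth L h -> 0 < L ->
  bregman h y x <= L / 2 * sqnorm (y - x).
Proof.
move=> dh sm L0; rewrite /bregman.
(* [phi r = h (x + r v) - c r - K r^2] has derivative
   [<grad h (x + r v) - grad h x, v> - L r |v|^2 <= 0] on [0, 1]. *)
set v := y - x; set c := dot (grad h x) v; set K := L / 2 * sqnorm v.
pose phi := (fun r : R => h (r *: v + x)) - (fun s : R => c * s + K * (s * s)).
have D (r : R) : is_derive r 1 phi (dot (grad h (r *: v + x)) v - (c + K * (r + r))).
  exact: is_deriveB (is_derive_line _ _ _ dh) (is_derive_quadratic c K r).
have phi_nonincr : {in `[0, 1] &, {homo phi : a b /~ a <= b}}.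
  apply: ler0_derive1_le_cc => [r _|r|]; first by case: (D r).
    rewrite in_itv /= => /andP[r0 _]; rewrite derive1E derive_val.
    set a := grad h (r *: v + x) - grad h x.
    have a_small : sqnorm a <= L ^+ 2 * (r ^+ 2 * sqnorm v).
      by rewrite -sqnormZ -[r *: v](addrK x); exact: L_smooth_sqnorm.
    have s0 : 0 < (L * r)^-1 by rewrite invr_gt0 mulr_gt0.
    have := dot_le_sqnorm a v s0; rewrite /a dotBl -/c invrK -/a.
    have : (L * r)^-1 / 2 * sqnorm a <= L * r / 2 * sqnorm v.
      have -> : L * r / 2 * sqnorm v = (L * r)^-1 / 2 * (L ^+ 2 * (r ^+ 2 * sqnorm v)).
        by field; rewrite !gt_eqF.
      by rewrite ler_wpM2l // divr_ge0 // ltW.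
    rewrite /K; lra.
  by apply: derivable_within_continuous => r _; case: (D r).
have := phi_nonincr 1 0; rewrite !in_itv /= !lexx ler01 => /(_ isT isT isT).
rewrite /phi !fctE scale1r /v subrK scale0r add0r; lra.
Qed.

End Smoothness.

Section StrongConvexity.
Variables (R : realType) (d : nat).
Notation vec := 'rV[R]_d.
Variables (h : vec -> R) (L mu : R).
Hypotheses (dh : forall z, differentiable h z) (sm : L_smooth L h) (L0 : 0 < L).
Hypothesis sc : strongly_convex mu h.

Lemma strongly_convex_bregman_ge x y : mu / 2 * sqnorm (y - x) <= bregman h y x.
Proof. by have := sc x y; rewrite /bregman sqnormBC; lra. Qed.

Lemma strongly_convex_le_smooth : (0 < d)%N -> mu <= L.
Proof.
move=> d0; pose e : vec := delta_mx 0 (Ordinal d0).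
have e_pos : 0 < sqnorm e.
  rewrite lt_def sqnorm_ge0 andbT; apply/eqP => /sqnorm_eq0 /rowP /(_ (Ordinal d0)).
  by rewrite !mxE !eqxx => /eqP; rewrite oner_eq0.
have := le_trans (strongly_convex_bregman_ge 0 e) (L_smooth_bregman_le 0 e dh sm L0).
by rewrite subr0 ler_pM2r // ler_pM2r.
Qed.

Hypothesis mu0 : 0 <= mu.

(* [D_h(., x)] is convex, L-smooth and minimal at [x]; one gradient step from [y]
   (the point [z] below) lowers it by at least [|grad h y - grad h x|^2 / 2L]. *)
Lemma bregman_ge_sqnorm_grad x y :
  L^-1 / 2 * sqnorm (grad h y - grad h x) <= bregman h y x.
Proof.
set g := grad h y - grad h x; set s := L^-1; set z := y - s *: g.
have s0 : 0 < s by rewrite invr_gt0.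
have zx_ge0 : 0 <= bregman h z x.
  apply: le_trans (strongly_convex_bregman_ge x z).
  by apply: mulr_ge0; [exact: divr_ge0 | exact: sqnorm_ge0].
have zy_le := L_smooth_bregman_le y z dh sm L0.
have zy : z - y = - (s *: g) by rewrite /z addrAC subrr add0r.
have zx : z - x = (y - x) - s *: g by rewrite /z addrAC.
rewrite /bregman zx dotBr dotZr in zx_ge0.
rewrite /bregman zy dotNr dotZr sqnormN sqnormZ in zy_le.
have ss : L / 2 * (s ^+ 2 * sqnorm g) = s / 2 * sqnorm g.
  by rewrite /s; field; rewrite gt_eqF.
have gg : s * sqnorm g = s * dot (grad h y) g - s * dot (grad h x) g.
  by rewrite /sqnorm {1}/g dotBl; ring.
rewrite /bregman; lra.
Qed.

Lemma gradient_step_contraction (gamma : R) (y z xs : vec) :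
  0 < gamma -> gamma <= L^-1 ->
  sqnorm ((y - gamma *: grad h y) - (z - gamma *: grad h xs))
    <= (1 - gamma * mu) * sqnorm (y - z) + 2 * gamma * bregman h z xs.
Proof.
move=> g0 gL; set u := y - z; set w := grad h y - grad h xs.
have -> : (y - gamma *: grad h y) - (z - gamma *: grad h xs) = u - gamma *: w.
  by apply/rowP => i; rewrite /u /w !mxE; ring.
rewrite sqnormB sqnormZ dotZr.
have three_point : dot u w = bregman h z y + bregman h y xs - bregman h z xs.
  rewrite /bregman /u /w !dotBr !dotBl (dotC (grad h y) y) (dotC (grad h y) z)
    (dotC (grad h xs) y) (dotC (grad h xs) z) (dotC (grad h xs) xs); ring.
have zy := strongly_convex_bregman_ge y z; rewrite sqnormBC -/u in zy.
have yxs := bregman_ge_sqnorm_grad xs y; rewrite -/w in yxs.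
have w_ge0 := sqnorm_ge0 w.
have := ler_wpM2l (ltW g0) zy; have := ler_wpM2l (ltW g0) yxs.
have : gamma ^+ 2 * sqnorm w <= gamma * L^-1 * sqnorm w.
  by apply: ler_wpM2r => //; rewrite expr2; apply: ler_wpM2l => //; exact: ltW.
rewrite three_point; lra.
Qed.

End StrongConvexity.

Section Optimality.
Variables (R : realType) (d : nat).
Notation vec := 'rV[R]_d.

Lemma sum_grad_eq0_of_min (I : finType) (h : I -> vec -> R) (K : R) (x : vec) :
  0 <= K -> (forall i y, bregman (h i) y x <= K * sqnorm (y - x)) ->
  (forall y, \sum_i h i x <= \sum_i h i y) -> \sum_i grad (h i) x = 0.
Proof.
move=> K0 hK xmin; set g := \sum_i grad (h i) x.
set c := #|I|%:R * K; set s := (1 + c)^-1; set y := x - s *: g.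
have c0 : 0 <= c by rewrite mulr_ge0.
have s0 : 0 < s by rewrite invr_gt0 ltr_pwDl.
have yx : y - x = - (s *: g) by rewrite /y addrAC subrr add0r.
have upper : \sum_i bregman (h i) y x <= c * (s ^+ 2 * sqnorm g).
  rewrite /c -sqnormZ -sqnormN -yx mulr_natl -sumr_const.
  by rewrite mulr_suml; apply: ler_sum => i _; exact: hK.
have sum_breg : \sum_i bregman (h i) y x = \sum_i h i y - \sum_i h i x + s * sqnorm g.
  by rewrite /bregman !sumrB -dot_suml -/g yx dotNr dotZr opprK.
have cs : c * s ^+ 2 = s - s ^+ 2 by rewrite /s; field; rewrite gt_eqF // ltr_pwDl.
have := xmin y; rewrite -subr_ge0 => gain.
have : s ^+ 2 * sqnorm g <= 0 by move: upper; rewrite sum_breg mulrA cs; lra.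
rewrite pmulr_rle0 ?exprn_gt0 // => g_le0.
by apply: sqnorm_eq0; apply/eqP; rewrite eq_le g_le0 sqnorm_ge0.
Qed.

End Optimality.

Section Cohorts.
Variables (C Rc : nat).
Hypothesis C0 : (0 < C)%N.
Notation M := (C * Rc)%N.

Lemma sum1_divn_eq (n r : nat) :
  (\sum_(0 <= k < C * n | k %/ C == r) 1 = if r < n then C else 0)%N.
Proof.
elim: n => [|n IH]; first by rewrite muln0 big_geq.
rewrite mulnS addnC (big_cat_nat _ (leq_addr C _)) //= IH.
have -> : (\sum_(C * n <= k < C * n + C | k %/ C == r) 1 = (r == n) * C)%N.
  rewrite (big_addn 0 _ (C * n)) addKn big_mkord.
  rewrite (eq_bigl (fun=> r == n)) => [|i]; last first.
    by rewrite addnC mulnC divnMDl // divn_small // addn0 eq_sym.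
  by case: (r == n); rewrite ?big_pred0_eq // big_const_ord iter_addn_0 !mul1n.
case: (ltngtP r n) => [rn|nr|->]; first by rewrite ltnS (ltnW rn) addn0.
  by rewrite ltnS leqNgt nr.
by rewrite ltnSn mul1n.
Qed.

Lemma card_cohort (rho : {perm 'I_M}) (r : nat) :
  (r < Rc)%N -> #|in_cohort rho r| = C.
Proof.
move=> rR; rewrite -sum1_card (reindex_inj (@perm_inj _ rho)) /=.
rewrite (eq_bigl (fun k : 'I_M => k %/ C == r)%N) => [|k]; last first.
  by rewrite unfold_in /in_cohort permK.
by rewrite -(big_mkord (fun k => k %/ C == r)%N (fun=> 1%N)) sum1_divn_eq rR.
Qed.

Lemma sum_cohort_const (V : nmodType) (rho : {perm 'I_M}) (r : nat) (y : V) :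
  (r < Rc)%N -> \sum_(m | in_cohort rho r m) y = y *+ C.
Proof. by move=> rR; rewrite -[in RHS](card_cohort rho rR); exact: sumr_const. Qed.

Lemma sum_cohorts (V : nmodType) (rho : {perm 'I_M}) (F : 'I_M -> V) :
  \sum_(r < Rc) \sum_(m | in_cohort rho r m) F m = \sum_m F m.
Proof.
rewrite (exchange_big_dep xpredT) //=; apply: eq_bigr => m _.
have lt_Rc : ((rho^-1)%g m %/ C < Rc)%N by rewrite ltn_divLR // [X in (_ < X)%N]mulnC.
by rewrite (big_pred1 (Ordinal lt_Rc)) // => r; rewrite /in_cohort eq_sym.
Qed.

End Cohorts.

Lemma foldl_scaled_steps (R : pzRingType) (V : lmodType R) (I : Type)
    (a : R) (G : I -> V) (s : seq I) (x : V) :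
  foldl (fun y i => y - a *: G i) x s = x - a *: \sum_(i <- s) G i.
Proof.
elim: s x => [|i s IH] x /=; first by rewrite big_nil scaler0 subr0.
by rewrite IH big_cons scalerDr opprD addrA.
Qed.

Section Iterates.
Variables (R : realType) (d C Rc N : nat).
Notation vec := 'rV[R]_d.
Notation M := (C * Rc)%N.
Variables (f : 'I_M -> 'I_N -> vec -> R) (gamma : R).
Hypotheses (C0 : (0 < C)%N) (Rc0 : (0 < Rc)%N) (N0 : (0 < N)%N) (gamma0 : 0 < gamma).

Lemma size_pseq (p : {perm 'I_N}) : size (pseq p) = N.
Proof. by rewrite size_map size_enum_ord. Qed.

Lemma nth_pseq (p : {perm 'I_N}) (j : 'I_N) i0 : nth i0 (pseq p) j = p j.
Proof.
rewrite /pseq (nth_map j) ?size_enum_ord //; congr (p _).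
by apply: val_inj; rewrite /= nth_enum_ord.
Qed.

Lemma local_run0 m p x : local_run f gamma m p 0 x = x.
Proof. by rewrite /local_run take0. Qed.

Lemma local_star0 xs m p x : local_star f gamma xs m p 0 x = x.
Proof. by rewrite /local_star take0. Qed.

Lemma local_runS m p (j : 'I_N) x :
  local_run f gamma m p j.+1 x =
  local_run f gamma m p j x - gamma *: grad (f m (p j)) (local_run f gamma m p j x).
Proof.
by rewrite /local_run (take_nth j) ?size_pseq // foldl_rcons nth_pseq.
Qed.

Lemma local_starS xs m p (j : 'I_N) x :
  local_star f gamma xs m p j.+1 x =
  local_star f gamma xs m p j x - gamma *: grad (f m (p j)) xs.
Proof.
by rewrite /local_star (take_nth j) ?size_pseq // foldl_rcons nth_pseq.
Qed.

Lemma local_star_epoch xs m p x :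
  local_star f gamma xs m p N x = x - gamma *: \sum_(i < N) grad (f m i) xs.
Proof.
rewrite /local_star take_oversize ?size_pseq // foldl_scaled_steps.
congr (_ - gamma *: _); rewrite /pseq big_map big_enum /=.
by rewrite [RHS](reindex_inj (@perm_inj _ p)).
Qed.

Let eta := gamma * N%:R.

Lemma roundsS (ed : epoch_data C Rc N) (r : nat) x : (r < Rc)%N ->
  rounds f gamma eta ed r.+1 x =
  (C%:R)^-1 *: \sum_(m | in_cohort ed.1 r m)
     local_run f gamma m (ed.2 m) N (rounds f gamma eta ed r x).
Proof.
move=> rR /=; set y := rounds _ _ _ _ _ _.
rewrite /round_step /client_g -scaler_sumr sumrB sum_cohort_const //.
rewrite -[y *+ C]scaler_nat !scalerA scalerBr scalerA.
have -> : eta / C%:R / (gamma * N%:R) = (C%:R)^-1.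
  by rewrite /eta; field; rewrite !pnatr_eq0 -!lt0n C0 N0 gt_eqF.
by rewrite mulVf ?pnatr_eq0 -?lt0n // scale1r opprB addrC subrK.
Qed.

Lemma epoch_step_rounds (ed : epoch_data C Rc N) x :
  epoch_step f gamma eta (eta * Rc%:R) ed x = rounds f gamma eta ed Rc x.
Proof.
have eta_Rc : eta * Rc%:R != 0 by rewrite !mulf_neq0 ?gt_eqF ?ltr0n.
by rewrite /epoch_step scalerA (mulfV eta_Rc) scale1r opprB addrC subrK.
Qed.

(* Each round moves the star iterate by the gradients at [xs] of its cohort, and the
   cohorts of a meta-epoch partition the clients. *)
Lemma star_rounds_epoch xs (ed : epoch_data C Rc N) :
  \sum_(m < M) \sum_(i < N) grad (f m i) xs = 0 ->
  star_rounds f gamma xs ed Rc = xs.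
Proof.
set G := fun m => \sum_(i < N) grad (f m i) xs => G0.
suff /(_ Rc (leqnn Rc)) -> : forall r, (r <= Rc)%N -> star_rounds f gamma xs ed r =
    xs - (gamma / C%:R) *: \sum_(r' < r) \sum_(m | in_cohort ed.1 r' m) G m.
  by rewrite sum_cohorts // G0 scaler0 subr0.
elim=> [|r IH] rR; first by rewrite big_ord0 scaler0 subr0.
rewrite /= (eq_bigr (fun m => star_rounds f gamma xs ed r - gamma *: G m)); last first.
  by move=> m _; rewrite local_star_epoch.
rewrite sumrB -scaler_sumr IH ?(ltnW rR) // sum_cohort_const // -[(xs - _) *+ C]scaler_nat.
rewrite big_ord_recr /= scalerBr scalerA mulVf ?pnatr_eq0 -?lt0n // scale1r.
by rewrite scalerA scalerDr opprD addrA mulrC.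
Qed.

End Iterates.

Section UniformExpectation.
Variables (R : realType) (O : finType).
Implicit Types (X Y : O -> R).

Lemma ler_Exp X Y : (forall w, X w <= Y w) -> Exp X <= Exp Y.
Proof.
move=> XY; apply: ler_wpM2l; first by rewrite invr_ge0 ler0n.
by apply: ler_sum => w _.
Qed.

Lemma Exp_linear (a b : R) X Y :
  Exp (fun w => a * X w + b * Y w) = a * Exp X + b * Exp Y.
Proof. by rewrite /Exp big_split /= -!mulr_sumr; ring. Qed.

Lemma Exp_cst_le (a : R) : 0 <= a -> Exp (fun _ : O => a) <= a.
Proof.
move=> a0; rewrite /Exp sumr_const -[a *+ _]mulr_natl mulrA.
have [->|O0] := eqVneq (#|O|%:R : R) 0; first by rewrite invr0 !mul0r.
by rewrite mulVf // mul1r.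
Qed.

Lemma sum_CExp X (A : pred O) : \sum_(w | A w) X w = #|A|%:R * CExp X A.
Proof.
have [A0|A0] := eqVneq (#|A|%:R : R) 0; last by rewrite /CExp mulrC -mulrA mulVf ?mulr1.
rewrite A0 mul0r big_pred0 // => w; apply/negbTE/negP => Aw.
by move/eqP: A0; rewrite pnatr_eq0 => /eqP/card0_eq/(_ w); rewrite unfold_in Aw.
Qed.

(* Double counting over the pairs [(w, i)] with [P w i]. *)
Lemma Exp_avg_le (I : finType) (P : O -> pred I) (X : O -> I -> R) (c : nat) (b : R) :
  (0 < c)%N -> (forall w, #|P w| = c) -> 0 <= b ->
  (forall i, CExp (X^~ i) (P^~ i) <= b) ->
  Exp (fun w => c%:R^-1 * \sum_(i | P w i) X w i) <= b.
Proof.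
move=> c0 Pc b0 Xb.
have exch (F : O -> I -> R) :
    \sum_w \sum_(i | P w i) F w i = \sum_i \sum_(w | P w i) F w i.
  under eq_bigr do rewrite big_mkcond; rewrite exchange_big.
  by apply: eq_bigr => i _; rewrite [RHS]big_mkcond.
have sum_b : \sum_w \sum_(i | P w i) b = #|O|%:R * (c%:R * b).
  under eq_bigr do rewrite sumr_const Pc.
  by rewrite sumr_const !mulr_natl.
have : \sum_w \sum_(i | P w i) X w i <= #|O|%:R * (c%:R * b).
  rewrite -sum_b !exch; apply: ler_sum => i _.
  rewrite sum_CExp [in X in _ <= X]sumr_const -[b *+ _]mulr_natl.
  by apply: ler_wpM2l; [exact: ler0n | exact: Xb].
rewrite /Exp -mulr_sumr => H.
apply: le_trans (ler_wpM2l _ (ler_wpM2l _ H)) _; rewrite ?invr_ge0 ?ler0n //.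
have [->|O0] := eqVneq (#|O|%:R : R) 0; first by rewrite invr0 mul0r.
suff -> : #|O|%:R^-1 * (c%:R^-1 * (#|O|%:R * (c%:R * b))) = b :> R by [].
by field; rewrite O0 pnatr_eq0 -lt0n c0.
Qed.

End UniformExpectation.

Lemma geometric_step (R : realFieldType) (q a c b e e' : R) (n : nat) :
  0 <= q -> b <= (1 - q) * c -> e <= q ^+ n * a + c -> e' <= q * e + b ->
  e' <= q ^+ n.+1 * a + c.
Proof.
move=> q0 bc en e'e; apply: le_trans e'e _.
have := ler_wpM2l q0 en; rewrite exprS; nra.
Qed.

Lemma favg_min_grad_sum_eq0 (R : realType) (d C Rc N : nat)
    (f : 'I_(C * Rc) -> 'I_N -> 'rV[R]_d -> R) (L : R) (xs : 'rV[R]_d) :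
  (0 < C * Rc * N)%N -> (forall m j x, differentiable (f m j) x) ->
  (forall m j, L_smooth L (f m j)) -> 0 < L ->
  (forall x, favg f xs <= favg f x) ->
  \sum_m \sum_(i < N) grad (f m i) xs = 0.
Proof.
move=> MN0 dh sm L0 xs_min.
have pairE (V : nmodType) (F : 'I_(C * Rc) -> 'I_N -> V) :
  \sum_m \sum_j F m j = \sum_p F p.1 p.2 := pair_big _ _ _.
have favgE x : favg f x = (C * Rc * N)%:R^-1 * \sum_p f p.1 p.2 x.
  rewrite /favg -(pairE _ (fun m j => f m j x)) mulr_sumr [RHS]mulr_sumr.
  by apply: eq_bigr => m _; rewrite mulrA -invfM -natrM.
rewrite (pairE _ (fun m i => grad (f m i) xs)).
apply: (@sum_grad_eq0_of_min _ _ _ _ (L / 2)) => [|p y|y].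
- by rewrite divr_ge0 // ltW.
- exact: L_smooth_bregman_le.
- by have := xs_min y; rewrite !favgE ler_pM2l // invr_gt0 ltr0n.
Qed.

Section Convergence.
Variables (R : realType) (d C Rc N T : nat).
Notation vec := 'rV[R]_d.
Notation M := (C * Rc)%N.
Variables (f : 'I_M -> 'I_N -> vec -> R) (L mu gamma : R) (x0 xs : vec).
Variables (O : finType) (ed : O -> 'I_T -> epoch_data C Rc N).
Hypotheses (C0 : (0 < C)%N) (Rc0 : (0 < Rc)%N) (N0 : (0 < N)%N).
Hypothesis dh : forall m j x, differentiable (f m j) x.
Hypotheses (L0 : 0 < L) (mu0 : 0 < mu) (gamma0 : 0 < gamma) (gammaL : gamma <= L^-1).
Hypothesis sc : forall m j, strongly_convex mu (f m j).
Hypothesis sm : forall m j, L_smooth L (f m j).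
Hypothesis grad_sum0 : \sum_m \sum_(i < N) grad (f m i) xs = 0.
Hypothesis q0 : 0 <= 1 - gamma * mu.

Let eta := gamma * N%:R.
Let q := 1 - gamma * mu.
Let sigma := max_sigma f gamma ed xs.

Definition iterate (w : O) (t : nat) : vec :=
  foldl (fun x t => epoch_step f gamma eta (eta * Rc%:R) (ed w t) x) x0
        (take t (enum 'I_T)).
Definition round_iterate (w : O) (t : 'I_T) (r : nat) : vec :=
  rounds f gamma eta (ed w t) r (iterate w t).
Definition star_iterate (w : O) (t : 'I_T) (r : nat) : vec :=
  star_rounds f gamma xs (ed w t) r.
Definition local_gap (w : O) (t : 'I_T) (r : nat) (j : nat) : R :=
  C%:R^-1 * \sum_(m | in_cohort (ed w t).1 r m)
    sqnorm (local_run f gamma m ((ed w t).2 m) j (round_iterate w t r)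
            - local_star f gamma xs m ((ed w t).2 m) j (star_iterate w t r)).

Definition bounded_by (n : nat) (X : O -> R) : Prop :=
  Exp X <= q ^+ n * sqnorm (x0 - xs) + 2 * gamma ^+ 2 / mu * sigma.

Lemma sigma_ge0 : 0 <= sigma.
Proof. exact: bigmax_ge_id. Qed.

Lemma bounded_by_le n (X Y : O -> R) :
  bounded_by n X -> (forall w, Y w <= X w) -> bounded_by n Y.
Proof. by move=> HX YX; apply: le_trans HX; exact: ler_Exp. Qed.

Lemma bounded_byS n (X Y b : O -> R) : bounded_by n X ->
  (forall w, Y w <= q * X w + 2 * gamma * b w) -> Exp b <= gamma ^+ 2 * sigma ->
  bounded_by n.+1 Y.
Proof.
move=> HX YX Eb.
apply: (geometric_step (b := 2 * gamma * (gamma ^+ 2 * sigma))) q0 _ HX _.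
  rewrite [X in _ <= X](_ : _ = 2 * gamma * (gamma ^+ 2 * sigma)) //.
  by rewrite /q; field; rewrite gt_eqF.
apply: le_trans (ler_Exp YX) _; rewrite Exp_linear lerD2l.
by apply: ler_wpM2l Eb; rewrite mulr_ge0 // ltW.
Qed.

Lemma Exp_cohort_bregman_le (t : 'I_T) (r : 'I_Rc) (j : 'I_N) :
  Exp (fun w => C%:R^-1 * \sum_(m | in_cohort (ed w t).1 r m)
                  star_breg f gamma xs (ed w t) r m j)
    <= gamma ^+ 2 * sigma.
Proof.
apply: Exp_avg_le => // [w||m]; first exact: card_cohort.
  by rewrite mulr_ge0 ?sqr_ge0 ?sigma_ge0.
have -> : CExp (fun w => star_breg f gamma xs (ed w t) r m j)
               (fun w => in_cohort (ed w t).1 r m)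
          = gamma ^+ 2 * sigmaDS f gamma ed xs t r m j.
  by rewrite /sigmaDS mulrA mulfV ?mul1r // expf_neq0 // gt_eqF.
apply: ler_wpM2l; first exact: sqr_ge0.
by do 4 apply: le_trans (le_bigmax _ _ _).
Qed.

Lemma local_gapS w t r (j : 'I_N) :
  local_gap w t r j.+1 <= q * local_gap w t r j
    + 2 * gamma * (C%:R^-1 * \sum_(m | in_cohort (ed w t).1 r m)
                                star_breg f gamma xs (ed w t) r m j).
Proof.
rewrite /local_gap [q * _]mulrCA [2 * gamma * _]mulrCA -mulrDr.
apply: ler_wpM2l; first by rewrite invr_ge0 ler0n.
rewrite !mulr_sumr -big_split; apply: ler_sum => m _ /=; rewrite local_runS local_starS.
exact: gradient_step_contraction (dh _ _) (sm _ _) L0 (sc _ _) (ltW mu0) _ _ _ _ gamma0 gammaL.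
Qed.

Lemma bounded_by_local_gap (t : 'I_T) (r : 'I_Rc) n :
  bounded_by n (fun w => local_gap w t r 0) ->
  forall j, (j <= N)%N -> bounded_by (n + j) (fun w => local_gap w t r j).
Proof.
move=> gap0; elim=> [|j IH] jN; first by rewrite addn0.
rewrite addnS; apply: bounded_byS (IH (ltnW jN)) _ (Exp_cohort_bregman_le t r (Ordinal jN)).
by move=> w; exact: (local_gapS w t r (Ordinal jN)).
Qed.

Lemma local_gap0 w t (r : 'I_Rc) :
  local_gap w t r 0 = sqnorm (round_iterate w t r - star_iterate w t r).
Proof.
rewrite /local_gap; under eq_bigr do rewrite local_run0 local_star0.
by rewrite sum_cohort_const // -[sqnorm _ *+ _]mulr_natl mulrA mulVf ?mul1r // pnatr_eq0 -lt0n.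
Qed.

Lemma round_gap_le_local_gap w t (r : 'I_Rc) :
  sqnorm (round_iterate w t r.+1 - star_iterate w t r.+1) <= local_gap w t r N.
Proof.
rewrite /round_iterate /star_iterate roundsS //= -scalerBr -sumrB.
apply: sqnorm_avg_le; first by rewrite ltr0n.
by rewrite sumr_const card_cohort.
Qed.

Lemma bounded_by_rounds (t : 'I_T) n :
  bounded_by n (fun w => sqnorm (iterate w t - xs)) ->
  forall r, (r <= Rc)%N ->
  bounded_by (n + r * N) (fun w => sqnorm (round_iterate w t r - star_iterate w t r)).
Proof.
move=> Ht; elim=> [|r IH] rR; first by rewrite mul0n addn0.
rewrite mulSn addnCA addnC.
apply: (bounded_by_le _ (fun w => round_gap_le_local_gap w t (Ordinal rR))).
apply: (bounded_by_local_gap (r := Ordinal rR)) => //.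
by apply: bounded_by_le (IH (ltnW rR)) _ => w; rewrite local_gap0.
Qed.

Lemma iterateS w t (tT : (t < T)%N) :
  iterate w t.+1 = epoch_step f gamma eta (eta * Rc%:R) (ed w (Ordinal tT)) (iterate w t).
Proof.
rewrite /iterate (take_nth (Ordinal tT)) ?size_enum_ord // foldl_rcons.
by congr (epoch_step _ _ _ _ (ed w _) _); apply: val_inj; rewrite /= nth_enum_ord.
Qed.

Lemma bounded_by_iterate t : (t <= T)%N ->
  bounded_by (t * (Rc * N)) (fun w => sqnorm (iterate w t - xs)).
Proof.
elim: t => [|t IH] tT.
  rewrite /bounded_by mul0n expr0 mul1r.
  under eq_fun do rewrite /iterate take0 /=.
  apply: le_trans (Exp_cst_le _ (sqnorm_ge0 (x0 - xs))) _.
  rewrite lerDl mulr_ge0 ?sigma_ge0 // divr_ge0 ?(ltW mu0) //.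
  by rewrite mulr_ge0 ?sqr_ge0.
rewrite mulSn addnC.
apply: (bounded_by_le (bounded_by_rounds (t := Ordinal tT) (IH (ltnW tT)) (leqnn Rc))) => w.
rewrite iterateS epoch_step_rounds //.
by rewrite /star_iterate star_rounds_epoch.
Qed.

Lemma rr_cli_bound_of_grad_sum_eq0 :
  rr_cli_bound f gamma eta (eta * Rc%:R) ed mu x0 xs.
Proof.
have := bounded_by_iterate (leqnn T).
rewrite /bounded_by /rr_cli_bound mulnC [(N * Rc)%N]mulnC.
by congr (Exp _ <= _); apply/funext => w; rewrite /iterate take_oversize ?size_enum_ord.
Qed.

End Convergence.

Lemma rr_cli_bound_dim0 (R : realType) (C Rc N T : nat)
    (f : 'I_(C * Rc) -> 'I_N -> 'rV[R]_0 -> R) (gamma eta theta mu : R)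
    (x0 xs : 'rV[R]_0) (O : finType) (ed : O -> 'I_T -> epoch_data C Rc N) :
  0 < mu -> rr_cli_bound f gamma eta theta ed mu x0 xs.
Proof.
move=> mu0; have sqnorm0 (u : 'rV[R]_0) : sqnorm u = 0 by rewrite /sqnorm /dot big_ord0.
rewrite /rr_cli_bound /Exp sqnorm0 mulr0 add0r big1 ?mulr0 => [|w _]; last exact: sqnorm0.
apply: mulr_ge0; last exact: bigmax_ge_id.
by apply: divr_ge0; [rewrite mulr_ge0 ?sqr_ge0 | exact: ltW].
Qed.

Unset Implicit Arguments.

Theorem theorem1 (R : realType) (d C Rc N T : nat)
  (f : 'I_(C * Rc) -> 'I_N -> 'rV[R]_d -> R)
  (L mu gamma : R) (x0 xs : 'rV[R]_d) :
  (0 < C)%N -> (0 < Rc)%N -> (0 < N)%N -> (1 <= T)%N ->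
  (forall m j x, differentiable (f m j) x) ->
  0 < mu ->
  (forall m j, strongly_convex mu (f m j)) ->
  (forall m j, L_smooth L (f m j)) ->
  (forall x, favg f xs <= favg f x) ->
  0 < gamma -> gamma <= L^-1 ->
  let eta := gamma * N%:R in
  let theta := eta * Rc%:R in
  rr_cli_bound f gamma eta theta (@ed_resample C Rc N T) mu x0 xs /\
  rr_cli_bound f gamma eta theta (@ed_once C Rc N T) mu x0 xs.
Proof.
move=> C0 Rc0 N0 _ dh mu0 sc sm xs_min gamma0 gammaL eta theta.
have L0 : 0 < L by rewrite -invr_gt0 (lt_le_trans gamma0 gammaL).
(* For [d = 0] the hypotheses do not give [mu <= L], but the bound is trivial. *)
have [d0|d_gt0] := posnP d; first by subst d; split; exact: rr_cli_bound_dim0.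
have M0 : (0 < C * Rc)%N by rewrite muln_gt0 C0 Rc0.
have muL : mu <= L.
  exact: strongly_convex_le_smooth (dh (Ordinal M0) (Ordinal N0)) (sm _ _) L0 (sc _ _) d_gt0.
have q0 : 0 <= 1 - gamma * mu.
  rewrite subr_ge0 -(mulVf (lt0r_neq0 L0)); apply: ler_pM gammaL muL => //; exact: ltW.
have MN0 : (0 < C * Rc * N)%N by rewrite !muln_gt0 C0 Rc0 N0.
have G0 := favg_min_grad_sum_eq0 MN0 dh sm L0 xs_min.
by split; apply: (rr_cli_bound_of_grad_sum_eq0 (L := L)).
Qed.
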